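(* There exist absolute constants $C_1,C_2>0$ such that for every compact set $\Omega\subset\mathbb{R}^d$ and every $N$-dimensional linear subspace $X_N$ of the space of real-valued continuous functions on $\Omega$, there exists a set of $m\le C_1N$ points $\xi^1,\dots,\xi^m\in\Omega$ such that for every $f\in X_N$ $$ \|f\|_\infty\le C_2\sqrt{N}\max_{1\le j\le m}|f(\xi^j)|, $$ where $\|f\|_\infty=\max_{\mathbf x\in\Omega}|f(\mathbf x)|$. *)

From HB Require Import structures.
From mathcomp Require Import all_boot all_order all_algebra.
From mathcomp Require Import all_classical all_reals all_analysis.
From mathcomp Require Import Rstruct Rstruct_topology.
From Stdlib Require Import Rdefinitions.
Set Implicit Arguments. Unset Strict Implicit. Unset Printing Implicit Defensive.
Import Order.TTheory GRing.Theory Num.Theory.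
Local Open Scope ring_scope.
Local Open Scope classical_set_scope.

Definition lin_comb (d N : nat) (phi : 'I_N -> 'rV[R]_d -> R) (c : 'I_N -> R)
  : 'rV[R]_d -> R := fun x => \sum_(i < N) c i * phi i x.

(* phi_1..phi_N are linearly independent as functions on Omega
   (so their span, restricted to Omega, is N-dimensional). *)
Definition lin_indep_on (d N : nat) (Omega : set 'rV[R]_d)
  (phi : 'I_N -> 'rV[R]_d -> R) : Prop :=
  forall c : 'I_N -> R, (forall x, Omega x -> lin_comb phi c x = 0) ->
    forall i, c i = 0.

Definition max_on_points (d m : nat) (f : 'rV[R]_d -> R) (xi : 'I_m -> 'rV[R]_d)
  : R := \big[Num.max/0]_(j < m) `|f (xi j)|.

(* Pick 2N points xi_j of Omega whose Gram matrix G = sum_j v(xi_j)^T v(xi_j),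
   with v(x) = (phi_i(x))_i, has a determinant at least half the supremum over
   Omega^(2N).  With the kernel K(u, z) = u G^-1 z^T, replacing xi_k by x
   multiplies det G by (1 + K(x,x))(1 - K(xi_k,xi_k)) + K(x,xi_k)^2 <= 2;
   summing over k, with sum_k K(xi_k,xi_k) = N and sum_k K(x,xi_k)^2 = K(x,x),
   gives K(x,x) <= 3.  Every f in the span satisfies f(x) = sum_j K(x,xi_j) f(xi_j),
   and sum_j |K(x,xi_j)| <= 3 sqrt N by AM-GM, so C1 = 2 and C2 = 3 work. *)

From HB Require Import structures.
From mathcomp Require Import all_boot all_order all_algebra.
From mathcomp Require Import all_classical all_reals all_analysis.
From mathcomp Require Import Rstruct Rstruct_topology.
From Stdlib Require Import Rdefinitions.
From mathcomp Require Import perm ring lra.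
Import Order.TTheory GRing.Theory Num.Theory.
Import numFieldNormedType.Exports.
Local Open Scope ring_scope.
Local Open Scope classical_set_scope.
Set Implicit Arguments. Unset Strict Implicit. Unset Printing Implicit Defensive.

Section Determinants.
Variable R : comRingType.

Lemma det_mx2 (A : 'M[R]_2) : \det A = A 0 0 * A 1 1 - A 0 1 * A 1 0.
Proof.
have lift2 (i : 'I_2) (j : 'I_1) : lift i j = if i == 0 then 1 else 0.
  by apply/val_inj; case: i j => [[|[|i]] ?] [[|j] ?].
rewrite (expand_det_row _ 0) !big_ord_recl big_ord0 /cofactor !det_mx11 !mxE.
by rewrite !lift2 /= expr0 expr1 mul1r mulN1r addr0 mulrN.
Qed.

Lemma det_block11 (a b c e : 'M[R]_1) :
  \det (block_mx a b c e) = a 0 0 * e 0 0 - b 0 0 * c 0 0.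
Proof.
rewrite det_mx2.
have -> : (0 : 'I_2) = lshift 1 (0 : 'I_1) :> 'I_(1 + 1) by apply/val_inj.
have -> : (1 : 'I_2) = rshift 1 (0 : 'I_1) :> 'I_(1 + 1) by apply/val_inj.
by rewrite (block_mxEul a b c e) (block_mxEur a b c e) (block_mxEdl a b c e)
  (block_mxEdr a b c e).
Qed.

Lemma det1D_mulmxC n k (A : 'M[R]_(n, k)) (B : 'M[R]_(k, n)) :
  \det (1%:M + A *m B) = \det (1%:M + B *m A).
Proof.
have l : block_mx 1%:M A (- B) 1%:M *m block_mx 1%:M (- A) 0 1%:M
   = block_mx 1%:M 0 (- B) (1%:M + B *m A).
  by rewrite mulmx_block !mulmx1 !mul1mx mulmx0 addNr !addr0 mulNmx mulmxN opprK addrC.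
have r : block_mx 1%:M (- A) 0 1%:M *m block_mx 1%:M A (- B) 1%:M
   = block_mx (1%:M + A *m B) 0 (- B) 1%:M.
  by rewrite mulmx_block !mulmx1 !mul1mx mul0mx mulNmx mulmxN opprK subrr !add0r.
have := congr1 determinant l; have := congr1 determinant r.
by rewrite !det_mulmx !det_lblock !det_ublock !det1 !mul1r !mulr1 => -> ->.
Qed.
End Determinants.

Section GramKernel.
Variable R : comUnitRingType.

Definition gram m N (w : 'I_m -> 'rV[R]_N) : 'M[R]_N := \sum_j (w j)^T *m w j.

Definition gram_kernel m N (w : 'I_m -> 'rV[R]_N) (u z : 'rV[R]_N) : R :=
  (u *m invmx (gram w) *m z^T) 0 0.

Lemma mulmx11E (P Q : 'M[R]_1) : (P *m Q) 0 0 = P 0 0 * Q 0 0.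
Proof. by rewrite mxE big_ord1. Qed.

Lemma gram_rows m N (A : 'M[R]_(m, N)) : gram (fun j => row j A) = A^T *m A.
Proof.
apply/matrixP => i l; rewrite summxE mxE; apply: eq_bigr => j _.
by rewrite mxE big_ord1 !mxE.
Qed.

Lemma gram_split_ord m n N (w : 'I_(m + n) -> 'rV[R]_N) :
  gram w = gram (w \o lshift n) + gram (w \o @rshift m n).
Proof. exact: big_split_ord. Qed.

Lemma gram_update m N (w : 'I_m -> 'rV[R]_N) k y :
  gram [eta w with k |-> y] = gram w - (w k)^T *m w k + y^T *m y.
Proof.
rewrite /gram (bigD1 k) //= eqxx [in RHS](bigD1 k) //=.
rewrite [(w k)^T *m w k + _]addrC addrK addrC.
by congr (_ + _); apply: eq_bigr => j /negPf ->.
Qed.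

Variables (m N : nat) (w : 'I_m -> 'rV[R]_N).
Hypothesis gram_unit : gram w \in unitmx.

Local Notation K := (gram_kernel w).

Lemma gram_kernelC u z : K u z = K z u.
Proof.
have gram_tr : (gram w)^T = gram w.
  by rewrite /gram raddf_sum /=; apply: eq_bigr => j _; rewrite trmx_mul trmxK.
rewrite /gram_kernel; set G := invmx (gram w).
rewrite -[in LHS](trmxK (u *m G *m z^T)) [in LHS]mxE.
by rewrite !trmx_mul trmxK trmx_inv gram_tr mulmxA.
Qed.

Lemma sum_gram_kernel_diag : \sum_k K (w k) (w k) = N%:R.
Proof.
rewrite -(mxtrace1 R N) -(mulVmx gram_unit) mulmx_sumr raddf_sum /=.
apply: eq_bigr => k _.
by rewrite /gram_kernel mulmxA mxtrace_mulC mulmxA /mxtrace big_ord1.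
Qed.

Lemma gram_kernel_repr u (c : 'cV[R]_N) :
  (u *m c) 0 0 = \sum_j K u (w j) * (w j *m c) 0 0.
Proof.
rewrite -{1}(mulmx1 u) -(mulVmx gram_unit) mulmxA mulmx_sumr mulmx_suml summxE.
by apply: eq_bigr => j _; rewrite /gram_kernel -mulmx11E !mulmxA.
Qed.

Lemma sum_gram_kernel_sqr u : \sum_k K u (w k) ^+ 2 = K u u.
Proof.
rewrite {2}/gram_kernel -mulmxA gram_kernel_repr; apply: eq_bigr => k _.
by rewrite expr2 mulmxA -/(gram_kernel w (w k) u) (gram_kernelC (w k)).
Qed.

Lemma det_gram_update k y :
  \det (gram [eta w with k |-> y]) =
  \det (gram w) * ((1 + K y y) * (1 - K (w k) (w k)) + K y (w k) ^+ 2).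
Proof.
pose U := row_mx y^T (w k)^T; pose W := col_mx y (- w k).
have -> : gram [eta w with k |-> y] = gram w *m (1%:M + invmx (gram w) *m U *m W).
  rewrite gram_update mulmxDr mulmx1 !mulmxA (mulmxV gram_unit) mul1mx.
  by rewrite mul_row_col mulmxN addrA addrAC.
rewrite det_mulmx det1D_mulmxC mulmxA mul_col_mx mul_col_row.
have kernel_mx u z : u *m invmx (gram w) *m z^T = (K u z)%:M by apply: mx11_scalar.
rewrite [1%:M]scalar_mx_block add_block_mx det_block11 !mulNmx !kernel_mx !mxE /=.
by rewrite (gram_kernelC (w k) y); congr (_ * _); ring.
Qed.

End GramKernel.

Lemma abs_gram_kernel_repr_le (R : realFieldType) m N (w : 'I_m -> 'rV[R]_N) u
    (c : 'cV[R]_N) :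
  gram w \in unitmx ->
  `|(u *m c) 0 0|
    <= (\sum_j `|gram_kernel w u (w j)|) * \big[Num.max/0]_j `|(w j *m c) 0 0|.
Proof.
move=> gram_unit; rewrite (gram_kernel_repr gram_unit) mulr_suml.
apply: le_trans (ler_norm_sum _ _ _) (ler_sum _ _) => j _.
by rewrite normrM ler_wpM2l // (le_bigmax _ _ j).
Qed.

Lemma det_gram_gt0_dup (R : realFieldType) N (A : 'M[R]_N) (w : 'I_(N + N) -> 'rV[R]_N) :
  A \in unitmx -> (forall i, w (lshift N i) = row i A /\ w (rshift N i) = row i A) ->
  0 < \det (gram w).
Proof.
move=> A_unit wA; have gram_half (f : 'I_N -> 'I_(N + N)) :
    (forall i, w (f i) = row i A) -> gram (w \o f) = A^T *m A.
  by move=> wf; rewrite -gram_rows; apply: eq_bigr => i _; rewrite /= wf.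
rewrite gram_split_ord !gram_half => [|i|i]; try by case: (wA i).
rewrite -mulr2n -scaler_nat detZ det_mulmx det_tr mulr_gt0 ?exprn_gt0 //.
by rewrite -expr2 exprn_even_gt0 //= -unitfE -unitmxE.
Qed.

Lemma det_le_entry_bound (R : realDomainType) n (A : 'M[R]_n) (E : R) :
  (forall i j, `|A i j| <= E) -> \det A <= n`!%:R * E ^+ n.
Proof.
move=> AE; rewrite mulr_natl -card_Sn -sumr_const.
apply: le_trans (ler_norm _) _; apply: le_trans (ler_norm_sum _ _ _) _.
apply: ler_sum => s _; rewrite normrM normrX normrN1 expr1n mul1r normr_prod.
rewrite -[X in E ^+ X]card_ord -prodr_const.
by apply: ler_prod => i _; rewrite normr_ge0 AE.
Qed.

Lemma det_gram_le (R : realFieldType) m N (w : 'I_m -> 'rV[R]_N) B :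
  (forall j i, `|w j 0 i| <= B) -> \det (gram w) <= N`!%:R * (m%:R * B ^+ 2) ^+ N.
Proof.
move=> wB; apply: det_le_entry_bound => i l; rewrite summxE.
apply: le_trans (ler_norm_sum _ _ _) _.
rewrite mulr_natl -[X in _ *+ X]card_ord -sumr_const.
apply: ler_sum => j _; rewrite mxE big_ord1 !mxE normrM expr2.
by apply: ler_pM; rewrite ?normr_ge0.
Qed.

Lemma gram_kernel_diag_le (R : realFieldType) m N (w : 'I_m -> 'rV[R]_N) y :
  0 < \det (gram w) ->
  (forall k, \det (gram [eta w with k |-> y]) <= 2 * \det (gram w)) ->
  (1 + gram_kernel w y y) * (m%:R - N%:R) + gram_kernel w y y <= 2 * m%:R.
Proof.
move=> det_gt0 near_max; have gram_unit : gram w \in unitmx.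
  by rewrite unitmxE unitfE gt_eqF.
have swap_le k : (1 + gram_kernel w y y) * (1 - gram_kernel w (w k) (w k))
    + gram_kernel w y (w k) ^+ 2 <= 2.
  by rewrite -(ler_pM2l det_gt0) -det_gram_update // [X in _ <= X]mulrC.
have : \sum_k ((1 + gram_kernel w y y) * (1 - gram_kernel w (w k) (w k))
    + gram_kernel w y (w k) ^+ 2) <= \sum_(k < m) 2 by apply: ler_sum => k _.
rewrite big_split /= -mulr_sumr sumrB sum_gram_kernel_diag // sum_gram_kernel_sqr //.
by rewrite !sumr_const card_ord -[2 *+ m]mulr_natr.
Qed.

Lemma sum_abs_le_AMGM (R : realFieldType) m (q : 'I_m -> R) (s : R) : 0 < s ->
  2 * \sum_j `|q j| <= s * \sum_j q j ^+ 2 + m%:R / s.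
Proof.
move=> s_gt0; have -> : m%:R / s = \sum_(j < m) s^-1.
  by rewrite sumr_const card_ord mulr_natl.
rewrite !mulr_sumr -big_split.
apply: ler_sum => j _; rewrite -real_normK ?num_real //.
have : 0 <= (s * `|q j| - 1) ^+ 2 / s by rewrite divr_ge0 ?sqr_ge0 ?ltW.
suff -> : (s * `|q j| - 1) ^+ 2 / s = s * `|q j| ^+ 2 + s^-1 - 2 * `|q j| by rewrite subr_ge0.
by field; rewrite gt_eqF.
Qed.

Lemma sum_abs_gram_kernel_le (R : rcfType) N (w : 'I_(N + N) -> 'rV[R]_N) y :
  0 < \det (gram w) ->
  (forall k, \det (gram [eta w with k |-> y]) <= 2 * \det (gram w)) ->
  \sum_j `|gram_kernel w y (w j)| <= 3 * Num.sqrt N%:R.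
Proof.
case: N w y => [|N] w y det_gt0 near_max; first by rewrite big_ord0 sqrtr0 mulr0.
have gram_unit : gram w \in unitmx by rewrite unitmxE unitfE gt_eqF.
set a := gram_kernel w y y.
have a_ge0 : 0 <= a by rewrite /a -sum_gram_kernel_sqr // sumr_ge0 // => k _; rewrite sqr_ge0.
have a_le3 : a <= 3.
  have := gram_kernel_diag_le det_gt0 near_max; rewrite -/a natrD addrK.
  have : (0 : R) < N.+1%:R by rewrite ltr0n.
  nra.
set s := Num.sqrt N.+1%:R; have s_gt0 : 0 < s by rewrite sqrtr_gt0 ltr0n.
have := sum_abs_le_AMGM (fun j => gram_kernel w y (w j)) s_gt0.
rewrite sum_gram_kernel_sqr // -/a.
have -> : (N.+1 + N.+1)%:R / s = 2 * s.
  by rewrite natrD -[N.+1%:R](@sqr_sqrtr R) ?ler0n // -/s; field; rewrite gt_eqF.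
have : s * a <= s * 3 by rewrite ler_pM2l.
lra.
Qed.

Section RowFreePoints.
Variables (F : fieldType) (T : Type) (P : set T) (N : nat) (v : T -> 'rV[F]_N).
Hypothesis v_span : forall u : 'rV[F]_N, (forall x, P x -> v x *m u^T = 0) -> u = 0.

Lemma row_free_col_mx_extend r (V : 'M[F]_(r, N)) :
  row_free V -> (r < N)%nat -> exists2 x, P x & row_free (col_mx (v x) V).
Proof.
move=> V_free r_lt_N; have rankV : \rank V = r by apply/eqP.
have [u u_ker u_neq0] : exists2 u : 'rV_N, (u <= kermx V^T)%MS & u != 0.
  apply/rowV0Pn; rewrite kermx_eq0 /row_free mxrank_tr rankV.
  by rewrite neq_ltn r_lt_N.
have [x Px vxu] : exists2 x, P x & v x *m u^T != 0.
  apply: contrapT => vu0; move/eqP: u_neq0; apply; apply: v_span => x Px.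
  by apply/eqP/negP => vxu; apply: vu0; exists x => //; apply/negP.
exists x => //; have : (V < v x + V)%MS.
  rewrite ltmxE addsmxSr addsmx_sub submx_refl andbT /=; apply/negP => /submxP [z vxE].
  by move: vxu; rewrite vxE -mulmxA -(trmxK V) -trmx_mul (sub_kermxP u_ker) trmx0 mulmx0 eqxx.
by move/rank_ltmx; rewrite addsmxE rankV /row_free eqn_leq rank_leq_row.
Qed.

Lemma exists_row_free_points :
  exists xi : 'I_N -> T, (forall j, P (xi j)) /\ \matrix_(j, i) v (xi j) 0 i \in unitmx.
Proof.
suff [xi [Pxi xi_free]] : exists xi : 'I_N -> T,
    (forall j, P (xi j)) /\ row_free (\matrix_(j, i) v (xi j) 0 i).
  by exists xi; rewrite -row_free_unit.
suff : forall r, (r <= N)%nat -> exists xi : 'I_r -> T,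
    (forall j, P (xi j)) /\ row_free (\matrix_(j < r, i < N) v (xi j) 0 i).
  by apply.
elim=> [|r IHr] r_lt_N.
  exists (ffun0 (card_ord 0)); split; first by case.
  by rewrite /row_free -leqn0 rank_leq_row.
have [xi [Pxi xi_free]] := IHr (ltnW r_lt_N).
have [x Px x_free] := row_free_col_mx_extend xi_free r_lt_N.
exists (fun j : 'I_(1 + r) => if fintype.split j is inr j' then xi j' else x : T); split.
  by move=> j; case: fintype.split.
apply: etrans x_free; congr (row_free _); apply/matrixP => j i.
by rewrite !mxE; case: fintype.split => [j'|j']; rewrite ?mxE ?ord1.
Qed.
End RowFreePoints.

Lemma exists_half_maximizer (R : realType) (T : Type) (P : set T) (D : T -> R) :
  (exists M, forall t, P t -> D t <= M) -> (exists2 t, P t & 0 < D t) ->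
  exists t, [/\ P t, 0 < D t & forall t', P t' -> D t' <= 2 * D t].
Proof.
move=> [M DM] [t0 Pt0 Dt0]; set s := sup (D @` P).
have supD : has_sup (D @` P).
  by split; [exists (D t0), t0 | exists M => _ [t Pt <-]; exact: DM].
have D_le_sup t : P t -> D t <= s by move=> Pt; apply: sup_upper_bound => //; exists t.
have s_gt0 : 0 < s := lt_le_trans Dt0 (D_le_sup t0 Pt0).
have [_ [t Pt <-] Dt_gt] := sup_adherent (divr_gt0 s_gt0 (ltr0n R 2)) supD.
rewrite -/s in Dt_gt; exists t; split => //; first lra.
by move=> t' Pt'; have := D_le_sup t' Pt'; lra.
Qed.

Lemma compact_continuous_bounded (R : realType) (X : topologicalType) (K : set X) n
    (f : 'I_n -> X -> R) :
  compact K -> (forall i, {within K, continuous (f i)}) ->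
  exists B : R, forall i x, K x -> `|f i x| <= B.
Proof.
move=> K_compact f_cont.
have /choice [B fB] i : exists B : R, forall x, K x -> `|f i x| <= B.
  have [B0 [_ f_bnd]] := @compact_bounded R R^o _ (continuous_compact (f_cont i) K_compact).
  by exists (B0 + 1) => x Kx; apply: f_bnd; [rewrite ltrDl | exists x].
exists (\sum_i `|B i|) => i x Kx; apply: le_trans (fB i x Kx) (le_trans (ler_norm _) _).
by rewrite (bigD1 i) //= lerDl sumr_ge0.
Qed.

Definition eval_row d N (phi : 'I_N -> 'rV[R]_d -> R) (x : 'rV[R]_d) : 'rV[R]_N :=
  \row_i phi i x.

Lemma lin_combE d N (phi : 'I_N -> 'rV[R]_d -> R) (c : 'I_N -> R) :
  lin_comb phi c = fun x => (eval_row phi x *m \col_i c i) 0 0.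
Proof.
by apply: funext => x; rewrite mxE; apply: eq_bigr => i _; rewrite !mxE mulrC.
Qed.

Lemma lin_indep_eval_row d N (Omega : set 'rV[R]_d) (phi : 'I_N -> 'rV[R]_d -> R) :
  lin_indep_on Omega phi ->
  forall u : 'rV[R]_N, (forall x, Omega x -> eval_row phi x *m u^T = 0) -> u = 0.
Proof.
move=> indep u u_orth; apply/rowP => i; rewrite mxE; apply: indep => x Ox.
rewrite lin_combE.
have -> : \col_i u 0 i = u^T by apply/colP => j; rewrite !mxE.
by rewrite u_orth ?mxE.
Qed.

Lemma exists_near_optimal_design d (Omega : set 'rV[R]_d) N (phi : 'I_N -> 'rV[R]_d -> R) :
  compact Omega -> (forall i, {within Omega, continuous (phi i)}) -> lin_indep_on Omega phi ->
  exists xi : 'I_(N + N) -> 'rV[R]_d,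
    [/\ forall j, Omega (xi j), 0 < \det (gram (eval_row phi \o xi)) &
        forall k x, Omega x ->
          \det (gram [eta eval_row phi \o xi with k |-> eval_row phi x])
            <= 2 * \det (gram (eval_row phi \o xi))].
Proof.
move=> Omega_compact phi_cont indep.
have [B phiB] := compact_continuous_bounded Omega_compact phi_cont.
have [xi0 [Oxi0 V_unit]] := exists_row_free_points (lin_indep_eval_row indep).
pose xi1 (j : 'I_(N + N)) := xi0 (match fintype.split j with inl i | inr i => i end).
have [||xi [Oxi det_gt0 near_max]] := exists_half_maximizer
    (P := fun xi : 'I_(N + N) -> 'rV[R]_d => forall j, Omega (xi j))
    (D := fun xi => \det (gram (eval_row phi \o xi))).
- exists (N`!%:R * ((N + N)%:R * B ^+ 2) ^+ N) => xi Oxi.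
  by apply: det_gram_le => j i; rewrite mxE phiB.
- exists xi1 => [j|]; first exact: Oxi0.
  apply: det_gram_gt0_dup V_unit _ => i.
  rewrite /= /xi1 (unsplitK (inl i : _ + 'I_N)) (unsplitK (inr i : 'I_N + _)).
  by split; apply/rowP => l; rewrite !mxE.
exists xi; split => // k x Ox.
have /near_max : forall j, Omega ([eta xi with k |-> x] j) by move=> j /=; case: (j == k).
by congr (_ <= _); congr (\det (gram _)); apply: funext => j /=; case: (j == k).
Qed.

Theorem corollary2p1 :
  exists C1 C2 : R, 0 < C1 /\ 0 < C2 /\
  forall (d : nat) (Omega : set 'rV[R]_d), compact Omega ->
  forall (N : nat) (phi : 'I_N -> 'rV[R]_d -> R),
    (forall i, {within Omega, continuous (phi i)}) ->
    lin_indep_on Omega phi ->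
    exists (m : nat) (xi : 'I_m -> 'rV[R]_d),
      (forall j, Omega (xi j)) /\
      (m%:R <= C1 * N%:R) /\
      forall c : 'I_N -> R, forall x, Omega x ->
        `|lin_comb phi c x| <= C2 * Num.sqrt (N%:R) * max_on_points (lin_comb phi c) xi.
Proof.
exists 2, 3; split; first lra; split; first lra.
move=> d Omega Omega_compact N phi phi_cont indep.
have [xi [Oxi det_gt0 near_max]] := exists_near_optimal_design Omega_compact phi_cont indep.
exists (N + N)%nat, xi; split => //; split; first by rewrite natrD; lra.
move=> c x Ox; rewrite /max_on_points lin_combE.
have gram_unit : gram (eval_row phi \o xi) \in unitmx by rewrite unitmxE unitfE gt_eqF.
apply: le_trans (abs_gram_kernel_repr_le _ _ gram_unit) _.
apply: ler_wpM2r; first exact: bigmax_ge_id.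
exact: sum_abs_gram_kernel_le det_gt0 (fun k => near_max k x Ox).
Qed.
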